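(* Let $\tilde C=(c_{nm}-c_{mn})_{n,m}$. Suppose there is a sequence of distinct nodes $n_1,\dots,n_k$ with $k>2$, such that $n_{i+1}\in\Omega_{n_i}$ for all $i$ (where $n_{k+1}:=n_1$), and $\sum_{i=1}^k\tilde C_{n_i,n_{i+1}}<0$. Then at every optimal solution of the centralized problem (P) there exists $i\in\{1,\dots,k\}$ with $q_{n_{i+1},n_i}=\kappa_{n_{i+1},n_i}$. Symmetrically, if $\sum_{i=1}^k\tilde C_{n_i,n_{i+1}}>0$, then at every optimal solution of (P) there exists $i$ with $q_{n_i,n_{i+1}}=\kappa_{n_i,n_{i+1}}$.
   Context: Model. $\mathcal N$ is a finite set of nodes (agents) containing a root node $0$. Each node $n$ has a neighborhood $\Omega_n\subseteq\mathcal N$ with $n\in\Omega_n$; the neighbor relation is symmetric ($m\in\Omega_n\iff n\in\Omega_m$) and every node is a neighbor of the root. Decision variables: demand $D_n$, flexibility activation $G_n$, and for each $m\in\Omega_n\setminus\{n\}$ a trade $q_{mn}\in\mathbb R$ (quantity sent from $m$ to $n$; $q_{mn}>0$ means $n$ buys from $m$). The net import of $n$ is $Q_n=\sum_{m\in\Omega_n\setminus\{n\}}q_{mn}$. Parameters: $0\le\underline D_n\le\overline D_n$, $0\le\underline G_n\le\overline G_n$, capacities $\kappa_{nm}=\kappa_{mn}\in[0,\infty)$, exogenous renewable generation $\Delta G_n$, constants $a_n,b_n,d_n>0$, $\tilde a_n,\tilde b_n>0$, target demand $D_n^\star$, preference prices $c_{nm}>0$. Costs/utilities: $C_n(G)=\tfrac12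 a_nG^2+b_nG+d_n$, $U_n(D)=-\tilde a_n(D-D_n^\star)^2+\tilde b_n$, $\tilde C_n(\mathbf q_n)=\sum_{m\in\Omega_n\setminus\{n\}}c_{nm}q_{mn}$, $\Pi_n=U_n(D_n)-C_n(G_n)-\tilde C_n(\mathbf q_n)$, $SW=\sum_{n\in\mathcal N}\Pi_n$. Centralized problem (P): maximize $SW$ over $(\mathbf D,\mathbf G,\mathbf q)$ subject to (1) $\underline D_n\le D_n\le\overline D_n$; (2) $\underline G_n\le G_n\le\overline G_n$; (3) $q_{mn}\le\kappa_{mn}$ for all $n$ and $m\in\Omega_n\setminus\{n\}$; (4) $q_{mn}+q_{nm}\le0$ for each pair of distinct neighbors; (5) $D_n=G_n+\Delta G_n+Q_n$ for all $n$. *)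

From HB Require Import structures.
From mathcomp Require Import all_boot all_order all_algebra.
Set Implicit Arguments. Unset Strict Implicit. Unset Printing Implicit Defensive.
Import Order.TTheory GRing.Theory Num.Theory.
Local Open Scope ring_scope.

Record model (R : realFieldType) (T : finType) := Model {
  root  : T;
  Omega : T -> T -> bool;       (* Omega n m  <=>  m \in Omega_n *)
  Dlo : T -> R; Dhi : T -> R;
  Glo : T -> R; Ghi : T -> R;
  kappa : T -> T -> R;
  dG : T -> R;
  ca : T -> R; cb : T -> R; cd : T -> R;
  ua : T -> R; ub : T -> R;
  Dstar : T -> R;
  c : T -> T -> R
}.

Definition wf_model (R : realFieldType) (T : finType) (M : model R T) : Prop :=
  (forall n, Omega M n n) /\
  (forall n m, Omega M n m = Omega M m n) /\
  (forall n, Omega M (root M) n) /\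
  (forall n, 0 <= Dlo M n /\ Dlo M n <= Dhi M n) /\
  (forall n, 0 <= Glo M n /\ Glo M n <= Ghi M n) /\
  (forall n m, kappa M n m = kappa M m n /\ 0 <= kappa M n m) /\
  (forall n, [/\ 0 < ca M n, 0 < cb M n & 0 < cd M n]) /\
  (forall n, 0 < ua M n /\ 0 < ub M n) /\
  (forall n m, 0 < c M n m).

(* q m n = q_{mn}: quantity sent from m to n (only relevant for m in Omega_n \ {n}). *)
Definition Qimp (R : realFieldType) (T : finType) (M : model R T)
  (q : T -> T -> R) (n : T) : R :=
  \sum_(m | Omega M n m && (m != n)) q m n.

Definition Cost (R : realFieldType) (T : finType) (M : model R T) (n : T) (g : R) : R :=
  2^-1 * ca M n * g ^+ 2 + cb M n * g + cd M n.

Definition Util (R : realFieldType) (T : finType) (M : model R T) (n : T) (x : R) : R :=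
  - (ua M n * (x - Dstar M n) ^+ 2) + ub M n.

Definition TradeCost (R : realFieldType) (T : finType) (M : model R T)
  (q : T -> T -> R) (n : T) : R :=
  \sum_(m | Omega M n m && (m != n)) c M n m * q m n.

Definition Pi (R : realFieldType) (T : finType) (M : model R T)
  (D G : T -> R) (q : T -> T -> R) (n : T) : R :=
  Util M n (D n) - Cost M n (G n) - TradeCost M q n.

Definition SW (R : realFieldType) (T : finType) (M : model R T)
  (D G : T -> R) (q : T -> T -> R) : R :=
  \sum_n Pi M D G q n.

Definition feasible (R : realFieldType) (T : finType) (M : model R T)
  (D G : T -> R) (q : T -> T -> R) : Prop :=
  [/\ (forall n, Dlo M n <= D n /\ D n <= Dhi M n),
      (forall n, Glo M n <= G n /\ G n <= Ghi M n),
      (forall n m, Omega M n m -> m != n -> q m n <= kappa M m n),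
      (forall n m, Omega M n m -> m != n -> q m n + q n m <= 0)
    & (forall n, D n = G n + dG M n + Qimp M q n)].

Definition optimal (R : realFieldType) (T : finType) (M : model R T)
  (D G : T -> R) (q : T -> T -> R) : Prop :=
  feasible M D G q /\
  (forall D' G' q', feasible M D' G' q' -> SW M D' G' q' <= SW M D G q).

Definition Ctilde (R : realFieldType) (T : finType) (M : model R T) (n m : T) : R :=
  c M n m - c M m n.

From HB Require Import structures.
From mathcomp Require Import all_boot all_order all_algebra.
From mathcomp Require Import ring lra zify.
Set Implicit Arguments. Unset Strict Implicit. Unset Printing Implicit Defensive.
Import Order.TTheory GRing.Theory Num.Theory.
Local Open Scope ring_scope.

(* A family of arcs x i -> y i (i < k) between distinct neighbours
   is balanced when every node is the tail of as many arcs as it is the head of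
   (e.g. the arcs of a cycle, taken in either direction).  Pushing an amount eps
   of extra trade along every arc of a balanced family, i.e. adding eps * circ
   to q where circ is the corresponding circulation, keeps trades antisymmetric
   and every net import Q_n unchanged; if no arc is saturated, a small eps > 0
   also respects the capacities.  The only effect on the welfare is through the
   trade costs, which change by eps times the total preference cost of the
   family.  Hence at an optimum with no saturated arc that cost is nonnegative. *)

Lemma uniform_step (R : realFieldType) (k : nat) (f : 'I_k -> R) :
  (forall i, 0 < f i) -> exists2 eps : R, 0 < eps & forall i, eps * k%:R <= f i.
Proof.
case: k f => [|k] f fpos; first by exists 1 => // -[].
case: (@arg_minP _ R _ ord0 xpredT f isT) => i0 _ fmin.
exists (f i0 / k.+1%:R) => [|i]; first by rewrite divr_gt0 ?ltr0Sn.
by rewrite mulfVK ?pnatr_eq0 // fmin.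
Qed.

Section Circulation.

Variables (R : realFieldType) (T : finType) (M : model R T).

Local Notation nbr n m := (Omega M n m && (m != n)).

Definition arc_ind (a b m n : T) : R := ((m == a) && (n == b))%:R.

Lemma arc_ind_swap (a b m n : T) : arc_ind a b m n = arc_ind b a n m.
Proof. by rewrite /arc_ind andbC. Qed.

Lemma sum_nbr_arc_ind (F : T -> R) (a b n : T) : nbr b a ->
  \sum_(m | nbr n m) F m * arc_ind a b m n = (n == b)%:R * F a.
Proof.
move=> ab; case: (eqVneq n b) => [->|nb]; last first.
  by rewrite mul0r big1 // => m _; rewrite /arc_ind (negbTE nb) andbF mulr0.
rewrite mul1r (bigD1 a) //= /arc_ind !eqxx mulr1 big1 ?addr0 // => m.
by case/andP=> _ /negbTE ->; rewrite mulr0.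
Qed.

Lemma sum_pointmass (F : T -> R) (b : T) : \sum_n (n == b)%:R * F n = F b.
Proof.
rewrite (bigD1 b) //= eqxx mul1r big1 ?addr0 // => n /negbTE ->.
by rewrite mul0r.
Qed.

Variables (k : nat) (x y : 'I_k -> T).

Hypothesis Omega_sym : forall n m, Omega M n m = Omega M m n.
Hypothesis arc_nbr : forall i, Omega M (x i) (y i).
Hypothesis arc_neq : forall i, x i != y i.
Hypothesis balanced : forall n, \sum_i (n == x i)%:R = \sum_i (n == y i)%:R :> R.

Lemma nbr_head i : nbr (y i) (x i).
Proof. by rewrite Omega_sym arc_nbr arc_neq. Qed.

Lemma nbr_tail i : nbr (x i) (y i).
Proof. by rewrite arc_nbr eq_sym arc_neq. Qed.

Definition circ (m n : T) : R :=
  \sum_i (arc_ind (x i) (y i) m n - arc_ind (y i) (x i) m n).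

Lemma circ_antisym m n : circ m n + circ n m = 0.
Proof.
rewrite -big_split big1 // => i _.
by rewrite /= !(arc_ind_swap _ _ n m) -opprB addNr.
Qed.

Lemma sum_nbr_circ (F : T -> R) n :
  \sum_(m | nbr n m) F m * circ m n =
  \sum_i ((n == y i)%:R * F (x i) - (n == x i)%:R * F (y i)).
Proof.
under eq_bigr do rewrite mulr_sumr.
rewrite exchange_big; apply: eq_bigr => i _.
under eq_bigr do rewrite mulrBr.
by rewrite sumrB !sum_nbr_arc_ind ?nbr_head ?nbr_tail.
Qed.

Lemma circ_inflow n : \sum_(m | nbr n m) circ m n = 0.
Proof.
under eq_bigr do rewrite -[circ _ _]mul1r.
rewrite sum_nbr_circ sumrB.
under eq_bigr do rewrite mulr1.
under [X in _ - X]eq_bigr do rewrite mulr1.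
by rewrite balanced subrr.
Qed.

(* Total trade cost of one unit of circulation: the preference cost of the
   family, c_{y x} paid by each head minus c_{x y} saved by each tail. *)
Definition family_cost : R := \sum_i (c M (y i) (x i) - c M (x i) (y i)).

Lemma circ_cost :
  \sum_n \sum_(m | nbr n m) c M n m * circ m n = family_cost.
Proof.
under eq_bigr do rewrite sum_nbr_circ.
rewrite exchange_big; apply: eq_bigr => i _.
by rewrite sumrB (sum_pointmass (c M ^~ (x i))) (sum_pointmass (c M ^~ (y i))).
Qed.

Lemma circ_le_count m n : circ m n <= \sum_i arc_ind (x i) (y i) m n.
Proof. by rewrite /circ sumrB gerBl sumr_ge0 // => i _; apply: ler0n. Qed.

Lemma circ_le_size m n : circ m n <= k%:R.
Proof.
apply: le_trans (circ_le_count m n) _.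
rewrite -[k in k%:R]card_ord -sumr_const; apply: ler_sum => i _.
by rewrite /arc_ind lern1 leq_b1.
Qed.

Lemma circ_le0 m n :
  (forall i, ~~ ((m == x i) && (n == y i))) -> circ m n <= 0.
Proof.
move=> off; apply: le_trans (circ_le_count m n) _.
by rewrite big1 // => i _; rewrite /arc_ind (negbTE (off i)).
Qed.

Definition push (q : T -> T -> R) (eps : R) (m n : T) : R :=
  q m n + eps * circ m n.

Lemma push_feasible D G q eps :
  feasible M D G q -> 0 <= eps ->
  (forall i, eps * k%:R <= kappa M (x i) (y i) - q (x i) (y i)) ->
  feasible M D G (push q eps).
Proof.
case=> HD HG Hcap Hanti Hbal eps_ge0 fits.
split=> // [n m nm mn | n m nm mn | n]; rewrite /push.
- case: (boolP [exists i, (m == x i) && (n == y i)]).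
    case/existsP=> i /andP[/eqP -> /eqP ->].
    have := ler_wpM2l eps_ge0 (circ_le_size (x i) (y i)).
    by have := fits i; lra.
  rewrite negb_exists => /forallP off_family.
  have := mulr_ge0_le0 eps_ge0 (circ_le0 off_family).
  by have := Hcap n m nm mn; lra.
- by rewrite addrACA -mulrDr circ_antisym mulr0 addr0; apply: Hanti.
- by rewrite Hbal /Qimp big_split /= -mulr_sumr circ_inflow mulr0 addr0.
Qed.

Lemma push_SW D G q eps :
  SW M D G (push q eps) = SW M D G q - eps * family_cost.
Proof.
rewrite /SW -circ_cost mulr_sumr -sumrB; apply: eq_bigr => n _.
rewrite /Pi /TradeCost /push.
under eq_bigr do rewrite mulrDr mulrCA.
by rewrite big_split /= -mulr_sumr; ring.
Qed.

(* Optimality criterion: if no arc of a balanced family is saturated at an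
   optimum, pushing a little along the family cannot increase welfare, so the
   family cost is nonnegative. *)
Theorem optimal_unsaturated_cost_ge0 D G q :
  optimal M D G q -> (forall i, q (x i) (y i) != kappa M (x i) (y i)) ->
  0 <= family_cost.
Proof.
case=> feas best unsat.
have [eps eps_gt0 fits] : exists2 eps : R, 0 < eps &
    forall i, eps * k%:R <= kappa M (x i) (y i) - q (x i) (y i).
  apply: uniform_step => i; rewrite subr_gt0 lt_neqAle unsat /=.
  case: feas => _ _ Hcap _ _; case/andP: (nbr_head i) => ?; exact: Hcap.
have := best _ _ _ (push_feasible feas (ltW eps_gt0) fits).
by rewrite push_SW gerDl oppr_le0 pmulr_rge0.
Qed.

Corollary optimal_saturated_arc D G q :
  optimal M D G q -> family_cost < 0 ->
  exists i, q (x i) (y i) = kappa M (x i) (y i).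
Proof.
move=> opt neg.
case: (boolP [exists i, q (x i) (y i) == kappa M (x i) (y i)]).
  by case/existsP=> i /eqP; exists i.
rewrite negb_exists => /forallP unsat.
by have := optimal_unsaturated_cost_ge0 opt unsat; rewrite leNgt neg.
Qed.

End Circulation.

Lemma family_cost_reverse (R : realFieldType) (T : finType) (M : model R T)
  (k : nat) (x y : 'I_k -> T) : family_cost M y x = - family_cost M x y.
Proof. by rewrite /family_cost -sumrN; apply: eq_bigr => i _; rewrite opprB. Qed.

Lemma ordS_neq (k : nat) (i : 'I_k) : (1 < k)%N -> ordS i != i.
Proof.
move=> k_gt1; apply/eqP => /(congr1 val) /=.
have := ltn_ord i; rewrite leq_eqVlt => /predU1P[/eqP last_i | not_last].
  by rewrite (eqP last_i) modnn; lia.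
by rewrite modn_small //; lia.
Qed.

Lemma cycle_balanced (R : realFieldType) (T : finType) (k : nat)
  (s : 'I_k -> T) (n : T) :
  \sum_i (n == s (ordS i))%:R = \sum_i (n == s i)%:R :> R.
Proof. by rewrite [RHS](reindex_inj (@ordS_inj k)). Qed.

(* The cycle n_1,...,n_k is s : 'I_k -> T; n_{i+1} is s (ordS i), cyclically. *)
Theorem proposition5 (R : realFieldType) (T : finType) (M : model R T)
  (HM : wf_model M) (k : nat) (s : 'I_k -> T)
  (Hk : (2 < k)%N) (Hinj : injective s)
  (Hnb : forall i : 'I_k, Omega M (s i) (s (ordS i))) :
  ((\sum_(i < k) Ctilde M (s i) (s (ordS i)) < 0) ->
     forall D G q, optimal M D G q ->
       exists i : 'I_k, q (s (ordS i)) (s i) = kappa M (s (ordS i)) (s i)) /\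
  ((\sum_(i < k) Ctilde M (s i) (s (ordS i)) > 0) ->
     forall D G q, optimal M D G q ->
       exists i : 'I_k, q (s i) (s (ordS i)) = kappa M (s i) (s (ordS i))).
Proof.
case: HM => _ [Omega_sym _].
have step_neq i : s (ordS i) != s i by rewrite (inj_eq Hinj) ordS_neq // ltnW.
have back_arc i : Omega M (s (ordS i)) (s i) by rewrite Omega_sym.
(* Run backwards, the cycle has family cost sum_i Ctilde_{n_i, n_{i+1}}. *)
have cost_back : \sum_(i < k) Ctilde M (s i) (s (ordS i)) =
                 family_cost M (fun i => s (ordS i)) s by [].
split=> [neg | pos] D G q opt.
- apply: (optimal_saturated_arc Omega_sym back_arc step_neq
                                 (cycle_balanced R s) opt).
  by rewrite -cost_back.
- have fwd_neq i : s i != s (ordS i) by rewrite eq_sym step_neq.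
  have fwd_balanced n := esym (cycle_balanced R s n).
  apply: (optimal_saturated_arc Omega_sym Hnb fwd_neq fwd_balanced opt).
  by rewrite family_cost_reverse -cost_back oppr_lt0.
Qed.
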